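(* For every $m\geq1$ and every $i\in\{1,\dots,N\}$, $$C^{(2m)}_{-i,i}\cdot v=G_i\, C^{(2m-1)}_{ii}\cdot v-\lambda_i\,C^{(2m-1)}_{-i,i}\cdot v.$$
   Context: Let $N\geq1$, $I=\{-N,\dots,-1,1,\dots,N\}$, and for $k\in I$ put $\bar k=0$ if $k>0$, $\bar k=1$ if $k<0$. The Lie superalgebra $\mathfrak{q}(N)$ over $\mathbb{C}$ is spanned by elements $F_{ij}$ ($i,j\in I$) with $F_{-i,-j}=F_{ij}$ (realized as $F_{ij}=E_{ij}+E_{-i,-j}\in\mathfrak{gl}(N|N)$), $F_{ij}$ of parity $\bar\imath+\bar\jmath\bmod 2$, and supercommutator $$[F_{ij}, F_{kl}] = \delta_{kj} F_{il} - (-1)^{(\bar{\imath}+ \bar{\jmath})(\bar{k} + \bar{l})} \delta_{il} F_{kj} + \delta_{k,-j} F_{-i,l} - (-1)^{(\bar{\imath} + \bar{\jmath})(\bar{k} + \bar{l})} \delta_{-i,l} F_{k,-j}.$$ For $n\geq1$ define $C^{(n)}_{ij}\in U(\mathfrak{q}(N))$ by $$C^{(n)}_{ij} = \sum_{k_1,\ldots,k_{n-1}\in I}F_{ik_1} (-1)^{\bar{k}_1} F_{k_1k_2} (-1)^{\bar{k}_2} \cdots F_{k_{n-2}k_{n-1}} (-1)^{\bar{k}_{n-1}} F_{k_{n-1}j}$$ (so $C^{(1)}_{ij}=F_{ij}$). For $i>0$ let $G_i=F_{-i,i}$ $(=F_{i,-i})$. Let $V$ be a representation of $\mathfrak{q}(N)$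 and $v\in V$ a vector such that $F_{ij}\cdot v=0$ whenever $|i|<|j|$, and $F_{ii}\cdot v=\lambda_i v$ for $i=1,\dots,N$, where $\lambda_1,\dots,\lambda_N\in\mathbb{C}$. *)

From HB Require Import structures.
From mathcomp Require Import all_boot all_order all_algebra.
Set Implicit Arguments. Unset Strict Implicit. Unset Printing Implicit Defensive.
Import Order.TTheory GRing.Theory Num.Theory.
Local Open Scope ring_scope.

(* Index set I = {-N,...,-1,1,...,N} encoded as bool * 'I_N:
   (false, a) stands for the positive index a+1,
   (true,  a) stands for the negative index -(a+1).
   Hence the parity \bar k is k.1 and |k| = k.2 + 1. *)
Definition qidx (N : nat) := (bool * 'I_N)%type.
Definition qneg N (k : qidx N) : qidx N := (~~ k.1, k.2).
Definition qpos N (a : 'I_N) : qidx N := (false, a).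
Definition qnegpos N (a : 'I_N) : qidx N := (true, a).

Definition qsign (R : ringType) N (i j k l : qidx N) : R :=
  (-1) ^+ ((i.1 (+) j.1) && (k.1 (+) l.1)).

(* rho : I x I -> End(V) is a representation of q(N): it respects the
   identification F_{-i,-j} = F_{ij} and the supercommutator relations. *)
Definition is_qrep (R : ringType) (V : lmodType R) N
    (rho : qidx N -> qidx N -> {linear V -> V}) : Prop :=
  (forall i j, rho (qneg i) (qneg j) =1 rho i j) /\
  (forall i j k l (w : V),
     rho i j (rho k l w) - qsign R i j k l *: rho k l (rho i j w) =
       ((k == j)%:R *: rho i l w)
     - qsign R i j k l *: ((i == l)%:R *: rho k j w)
     + ((k == qneg j)%:R *: rho (qneg i) l w)
     - qsign R i j k l *: ((qneg i == l)%:R *: rho k (qneg j) w)).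

(* Cop n i j = action of C^{(n+1)}_{ij}:
   C^{(1)}_{ij} = F_{ij},
   C^{(n+1)}_{ij} = sum_k F_{ik} (-1)^{\bar k} C^{(n)}_{kj}. *)
Fixpoint Cop (R : ringType) (V : lmodType R) N
    (rho : qidx N -> qidx N -> {linear V -> V}) (n : nat) (i j : qidx N) (w : V)
    : V :=
  match n with
  | 0 => rho i j w
  | n'.+1 => \sum_(k : qidx N) ((-1) ^+ k.1 *: rho i k (Cop rho n' k j w))
  end.

(* Cact n i j w = C^{(n)}_{ij} . w  for n >= 1 *)
Definition Cact (R : ringType) (V : lmodType R) N
    (rho : qidx N -> qidx N -> {linear V -> V}) (n : nat) (i j : qidx N) (w : V)
    : V := Cop rho n.-1 i j w.

Definition qabs N (k : qidx N) : nat := (k.2 : nat).+1.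

From HB Require Import structures.
From mathcomp Require Import all_boot all_order all_algebra.
From mathcomp Require Import zify.
Import Order.TTheory GRing.Theory Num.Theory.
Local Open Scope ring_scope.

(* Via the recursion C^(n+1)_cd = sum_k F_ck (-1)^k C^(n)_kd and the super-Leibniz
   rule, every C^(n)_cd satisfies the same supercommutation relations with F_ab as
   F_cd itself.  Expand C^(2m)_{-i,i} v along its first factor.  The summands with
   |k| < |i| vanish, since C^(n)_kj v = 0 whenever |k| < |j|.  For |j| > |i| the
   summands k = j and k = -j cancel: as F_{-i,+-j} v = 0, the relations turn them into
   C_{-i,i} v - C_{j,-j} v and C_{-i,i} v - C_{-j,j} v, and C^(n)_{-j,j} = (-1)^(n-1)
   C^(n)_{j,-j} with n = 2m-1 odd.  Finally F_{-i,-i} = F_ii commutes with C_{-i,i},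
   which makes the k = -i summand equal to -lambda_i C^(2m-1)_{-i,i} v. *)

Section ScaledSums.
Variables (R : comNzRingType) (V : lmodType R) (I : finType).
Implicit Types (F : I -> V) (g h : I -> R).

Lemma sum_scale_const F h e :
  \sum_i h i *: (e *: F i) = e *: \sum_i h i *: F i.
Proof. by rewrite scaler_sumr; apply: eq_bigr => i _; rewrite !scalerA mulrC. Qed.

Lemma sum_scale_deltal F g h j :
  \sum_i h i *: (g i *: ((j == i)%:R *: F i)) = h j *: (g j *: F j).
Proof.
rewrite (bigD1 j) //= eqxx scale1r big1 ?addr0 // => i.
by rewrite eq_sym => /negbTE ->; rewrite scale0r !scaler0.
Qed.

Lemma sum_scale_deltar F g h j :
  \sum_i h i *: (g i *: ((i == j)%:R *: F i)) = h j *: (g j *: F j).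
Proof. by rewrite -(sum_scale_deltal _ _ _ j); apply: eq_bigr => i; rewrite eq_sym. Qed.

End ScaledSums.

Lemma qnegK {N} : involutive (@qneg N).
Proof. by case=> [x y]; rewrite /qneg /= negbK. Qed.

Lemma qneg_eqF N (k : qidx N) : (k == qneg k) = false.
Proof. by case: k => [[] y]; rewrite /qneg /= xpair_eqE. Qed.

Lemma sum_qidx (V : nmodType) N (F : qidx N -> V) :
  \sum_(k : qidx N) F k = \sum_(y : 'I_N) (F (qnegpos y) + F (qpos y)).
Proof.
rewrite big_split /=; transitivity (\sum_(b : bool) \sum_(y < N) F (b, y)).
  by rewrite pair_big; apply: eq_bigr => -[].
by rewrite big_bool.
Qed.

Lemma qsign_mul (R : comNzRingType) N (a b c k d : qidx N) :
  qsign R a b c k * qsign R a b k d = qsign R a b c d.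
Proof.
by case: a b c k d => [[] ?] [[] ?] [[] ?] [[] ?] [[] ?];
  rewrite /qsign /= ?expr0 ?expr1 ?mulrNN ?mulr1 ?mul1r.
Qed.

Lemma qsign_swap (R : comNzRingType) N (a b c : qidx N) :
  (-1) ^+ a.1 * qsign R a b c a = (-1) ^+ b.1 * qsign R a b c b.
Proof.
by case: a b c => [[] ?] [[] ?] [[] ?]; rewrite /qsign /= ?expr0 ?expr1 ?mulrNN ?mulr1 ?mul1r.
Qed.

Lemma qsign_swapN (R : comNzRingType) N (a b c : qidx N) :
  (-1) ^+ (qneg a).1 * qsign R a b c (qneg a)
  = (-1) ^+ (qneg b).1 * qsign R a b c (qneg b).
Proof.
by case: a b c => [[] ?] [[] ?] [[] ?]; rewrite /qsign /= ?expr0 ?expr1 ?mulrNN ?mulr1 ?mul1r.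
Qed.

Section QRepresentation.
Context {R : comNzRingType} {V : lmodType R} {N : nat}.
Context {rho : qidx N -> qidx N -> {linear V -> V}} (hrho : is_qrep rho).

(* The right-hand side of the relations in [is_qrep], with a family X of operators
   in place of F: the supercommutator [F_ab, X_cd] should equal [qbracket X a b c d]. *)
Definition qbracket (X : qidx N -> qidx N -> V -> V) (a b c d : qidx N) (w : V) :=
  (c == b)%:R *: X a d w - qsign R a b c d *: ((a == d)%:R *: X c b w)
  + (c == qneg b)%:R *: X (qneg a) d w
  - qsign R a b c d *: ((qneg a == d)%:R *: X c (qneg b) w).

Lemma linear_qbracket (f : {linear V -> V}) X a b c d w :
  f (qbracket X a b c d w) = qbracket (fun i j w => f (X i j w)) a b c d w.
Proof. by rewrite /qbracket !(linearD f, linearN f, linearZZ f). Qed.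

Lemma CopZ n c d x w : Cop rho n c d (x *: w) = x *: Cop rho n c d w.
Proof.
elim: n c d => [|n IH] c d /=; first exact: linearZ.
rewrite scaler_sumr; apply: eq_bigr => k _.
by rewrite IH linearZ !scalerA mulrC.
Qed.

Lemma Cop0 n c d : Cop rho n c d 0 = 0.
Proof. by have := CopZ n c d 0 0; rewrite !scale0r. Qed.

Lemma Cop_supercomm n a b c d w :
  rho a b (Cop rho n c d w) - qsign R a b c d *: Cop rho n c d (rho a b w)
  = qbracket (Cop rho n) a b c d w.
Proof.
elim: n c d w => [|n IH] c d w; first exact: hrho.2.
have leibniz k :
    rho a b (rho c k (Cop rho n k d w))
      - qsign R a b c d *: rho c k (Cop rho n k d (rho a b w))
    = qbracket (Cop rho 0) a b c k (Cop rho n k d w)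
      + qsign R a b c k *: rho c k (qbracket (Cop rho n) a b k d w).
  have -> : qbracket (Cop rho 0) a b c k (Cop rho n k d w)
      = rho a b (rho c k (Cop rho n k d w))
        - qsign R a b c k *: rho c k (rho a b (Cop rho n k d w)).
    by rewrite hrho.2.
  rewrite -IH linearB [rho c k (_ *: _)]linearZZ scalerBr scalerA qsign_mul.
  by rewrite addrA subrK.
rewrite /= linear_sum scaler_sumr -sumrB.
under eq_bigr => k _ do
  rewrite (linearZZ (rho a b)) scalerA mulrC -scalerA -scalerBr leibniz scalerDr.
rewrite big_split /=.
have -> : \sum_(k : qidx N) (-1) ^+ k.1 *: qbracket (Cop rho 0) a b c k (Cop rho n k d w)
    = (c == b)%:R *: Cop rho n.+1 a d w
      - ((-1) ^+ a.1 * qsign R a b c a) *: rho c b (Cop rho n a d w)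
      + (c == qneg b)%:R *: Cop rho n.+1 (qneg a) d w
      - ((-1) ^+ (qneg a).1 * qsign R a b c (qneg a))
          *: rho c (qneg b) (Cop rho n (qneg a) d w).
  under eq_bigr => k _ do rewrite /qbracket !(scalerDr, scalerBr, scalerN).
  by rewrite !(big_split, sumrN) /= !sum_scale_const !sum_scale_deltal !scalerA.
have -> : \sum_(k : qidx N) (-1) ^+ k.1 *:
      (qsign R a b c k *: rho c k (qbracket (Cop rho n) a b k d w))
    = ((-1) ^+ b.1 * qsign R a b c b) *: rho c b (Cop rho n a d w)
      - qsign R a b c d *: ((a == d)%:R *: Cop rho n.+1 c b w)
      + ((-1) ^+ (qneg b).1 * qsign R a b c (qneg b))
          *: rho c (qneg b) (Cop rho n (qneg a) d w)
      - qsign R a b c d *: ((qneg a == d)%:R *: Cop rho n.+1 c (qneg b) w).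
  under eq_bigr => k _ do rewrite linear_qbracket /qbracket
    !(scalerDr, scalerBr, scalerN) ![qsign R a b c k *: (qsign R a b k d *: _)]scalerA qsign_mul.
  by rewrite !(big_split, sumrN) /= !sum_scale_const !sum_scale_deltar !scalerA.
rewrite qsign_swap qsign_swapN /qbracket -!addrA; congr (_ + _).
by rewrite addrCA (addrCA (- _)) addKr (addrCA (- _)) addKr addrCA.
Qed.

Lemma Cop_qneg n c d w :
  Cop rho n (qneg c) (qneg d) w = (-1) ^+ n *: Cop rho n c d w.
Proof.
elim: n c d w => [|n IH] c d w /=; first by rewrite hrho.1 scale1r.
rewrite (reindex_inj (inv_inj (@qnegK N))) scaler_sumr; apply: eq_bigr => k _.
rewrite -{2}(qnegK k) IH hrho.1 qnegK linearZZ !scalerA exprS.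
by case: k => [[] ?]; rewrite /= ?expr0 ?expr1 ?mulN1r ?mulr1 ?mul1r ?mulrN1 ?opprK.
Qed.

Lemma rho_diag_Cop n a w :
  rho (qpos a) (qpos a) (Cop rho n (qnegpos a) (qpos a) w)
  = Cop rho n (qnegpos a) (qpos a) (rho (qpos a) (qpos a) w).
Proof.
apply/eqP; rewrite -subr_eq0; apply/eqP.
have := Cop_supercomm n (qpos a) (qpos a) (qnegpos a) (qpos a) w.
rewrite /qbracket /qsign /qpos /qnegpos /qneg /= !xpair_eqE /= eqxx expr0 scale1r => ->.
by rewrite !scale0r !scaler0 /= !scale1r sub0r addNr subr0.
Qed.

Context {v : V} (hv : forall i j : qidx N, (qabs i < qabs j)%N -> rho i j v = 0).

Lemma Cop_highest_weight n a b : (qabs a < qabs b)%N -> Cop rho n a b v = 0.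
Proof.
elim: n a b => [|n IH] a b ab /=; first exact: hv.
apply: big1 => k _.
have [kb|bk] := ltnP (qabs k) (qabs b); first by rewrite IH // linear0 scaler0.
have ak : (qabs a < qabs k)%N by apply: leq_trans ab bk.
have [ab' aNb'] : (a == b) = false /\ (qneg a == b) = false.
  by split; apply: contraTF ab => /eqP <-; rewrite ltnn.
have := Cop_supercomm n a k k b v.
rewrite hv // Cop0 scaler0 subr0 /qbracket eqxx scale1r (IH a b ab) ab' aNb' qneg_eqF.
by rewrite !scale0r !scaler0 !subr0 !addr0 => ->; rewrite scaler0.
Qed.

Lemma Cop_pair_cancel n a y : ~~ odd n -> (val a < val y)%N ->
  rho (qnegpos a) (qpos y) (Cop rho n (qpos y) (qpos a) v)
  = rho (qnegpos a) (qnegpos y) (Cop rho n (qnegpos y) (qpos a) v).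
Proof.
move=> even_n ay.
have := Cop_supercomm n (qnegpos a) (qpos y) (qpos y) (qpos a) v.
have := Cop_supercomm n (qnegpos a) (qnegpos y) (qnegpos y) (qpos a) v.
rewrite !hv ?/qabs ?ltnS // !Cop0 !scaler0 !subr0 => -> ->.
rewrite /qbracket /qsign /qpos /qnegpos /qneg /= !xpair_eqE /= !eqxx.
rewrite -[Cop rho n (true, y) (false, y) v]/(Cop rho n (qneg (qpos y)) (qneg (qnegpos y)) v).
have sign_n : (-1) ^+ n = 1 :> R by rewrite -signr_odd (negbTE even_n).
by rewrite Cop_qneg sign_n !scale0r !scale1r.
Qed.

End QRepresentation.

Theorem mainTheorem8 (R : numClosedFieldType) (N : nat) (hN : (1 <= N)%N)
    (V : lmodType R) (rho : qidx N -> qidx N -> {linear V -> V})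
    (hrho : is_qrep rho) (v : V) (lambda : 'I_N -> R)
    (hhw : forall i j : qidx N, (qabs i < qabs j)%N -> rho i j v = 0)
    (hdiag : forall a : 'I_N, rho (qpos a) (qpos a) v = lambda a *: v) :
  forall (m : nat) (a : 'I_N), (1 <= m)%N ->
    Cact rho (2 * m) (qnegpos a) (qpos a) v =
      rho (qnegpos a) (qpos a) (Cact rho (2 * m - 1) (qpos a) (qpos a) v)
      - lambda a *: Cact rho (2 * m - 1) (qnegpos a) (qpos a) v.
Proof.
move=> [|m] a // _.
rewrite /Cact (_ : (2 * m.+1).-1 = (2 * m).+1)%N; last by lia.
rewrite (_ : (2 * m.+1 - 1).-1 = 2 * m)%N; last by lia.
have : ~~ odd (2 * m) by rewrite mul2n odd_double.
move: (2 * m)%N => n even_n.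
rewrite /= sum_qidx (bigD1 a) //= big1 ?addr0 => [|y ya]; rewrite expr1 expr0 scaleN1r scale1r.
  rewrite addrC [rho (qnegpos a) (qnegpos a) _](hrho.1 (qpos a) (qpos a)).
  by rewrite (rho_diag_Cop hrho) hdiag CopZ.
have [ya'|ay|/val_inj ay] := ltngtP (val y) (val a).
- by rewrite !(Cop_highest_weight hrho hhw) ?linear0 ?oppr0 ?addr0 // /qabs ?ltnS.
- by rewrite (Cop_pair_cancel hrho hhw) // addNr.
- by rewrite ay eqxx in ya.
Qed.
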